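(* Let $w_1,w_2,w_3>0$ and let $D$ be the real symmetric $4\times4$ matrix with $D_{i,i+1}=D_{i+1,i}=w_i^{-1}$ for $i=1,2,3$ and all other entries $0$. Let $\lambda=d^D(1,4)$. If $w_2>\sqrt{w_1w_3}$ then $$\lambda=\frac{\sqrt{w_1^2+w_2^2}\,\sqrt{w_3^2+w_2^2}}{w_2},$$ and if $w_2\le\sqrt{w_1w_3}$ then $\lambda=w_1+w_3$.
   Context: For a self-adjoint $n\times n$ matrix $M$, $d^M(i,j)=\sup\{|a(i)-a(j)| : a\in\mathbb{C}^n,\ \|[M,\pi(a)]\|\le 1\}$, where $\pi(a)=\mathrm{diag}(a(1),\dots,a(n))$ and $\|\cdot\|$ is the operator norm. *)

From HB Require Import structures.
From mathcomp Require Import all_boot all_order all_algebra.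
From mathcomp Require Import all_classical all_reals.
From mathcomp.analysis Require Import ereal.
From mathcomp.real_closed Require Import complex.
Set Implicit Arguments. Unset Strict Implicit. Unset Printing Implicit Defensive.
Import Order.TTheory GRing.Theory Num.Theory.
Local Open Scope ring_scope.
Local Open Scope classical_set_scope.

Section Spectral.
Variable R : realType.
Local Notation C := R[i].

Definition cabs (z : C) : R := Normc.normc z.

Definition vnorm n (x : 'cV[C]_n) : R := Num.sqrt (\sum_(k < n) cabs (x k 0) ^+ 2).

Definition opnorm n (A : 'M[C]_n) : R :=
  sup [set vnorm (A *m x) | x in [set x : 'cV[C]_n | vnorm x <= 1]].

Definition pimx n (a : 'I_n -> C) : 'M[C]_n :=
  \matrix_(i, j) (if i == j then a i else 0).

Definition commx n (M N : 'M[C]_n) : 'M[C]_n := M *m N - N *m M.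

Definition dM n (M : 'M[C]_n) (i j : 'I_n) : \bar R :=
  ereal_sup [set (cabs (a i - a j))%:E |
             a in [set a : 'I_n -> C | opnorm (commx M (pimx a)) <= 1]].

(* the 4x4 path matrix: D_{i,i+1} = D_{i+1,i} = w_i^{-1} (1-based), 0 elsewhere *)
Definition wpath (w1 w2 w3 : R) (k : nat) : R :=
  if k == 0%N then w1^-1 else if k == 1%N then w2^-1 else w3^-1.

Definition pathD (w1 w2 w3 : R) : 'M[C]_4 :=
  \matrix_(i, j)
    (if j == i.+1 :> nat then ((wpath w1 w2 w3 i)%:C)%C
     else if i == j.+1 :> nat then ((wpath w1 w2 w3 j)%:C)%C else 0).

End Spectral.

From HB Require Import structures.
From mathcomp Require Import all_boot all_order all_algebra.
From mathcomp Require Import all_classical all_reals.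
From mathcomp.analysis Require Import ereal.
From mathcomp.real_closed Require Import complex.
From mathcomp Require Import ring lra.
Import Order.TTheory GRing.Theory Num.Theory.
Local Open Scope ring_scope.
Local Open Scope classical_set_scope.
Set Implicit Arguments. Unset Strict Implicit.

(* The commutator [D, pi(a)] has entries D_kl (a_l - a_k), so a is admissible iff the path
   matrix with entries +-(a_(k+1) - a_k) / w_k is a contraction.  Write
   n1 = sqrt (w1^2 + w2^2) and n3 = sqrt (w3^2 + w2^2).
   Upper bounds come from test vectors.  The unit vector (0, w2, 0, -w3) / n3 controls
   w2 |a_2 - a_1| / (w1 n3) and |a_2 - a_4| / n3 jointly, and Cauchy-Schwarz gives
   |a_1 - a_4| <= n1 n3 / w2.  When w2^2 <= w1 w3, the vector e_3 gives |a_3 - a_4| <= w3 and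
   (w1, 0, -w2, 0) / n1 controls |a_1 - a_3| and |a_3 - a_4| jointly, whence
   |a_1 - a_4| <= w1 + w3.
   Lower bounds use real a with increments a_(k+1) - a_k = w_k b_k: the commutator is then
   the real antisymmetric tridiagonal matrix with entries b_k, which acts on the odd and on
   the even coordinates by two triangular 2x2 blocks, both contractions as soon as
   b1^2, b3^2 <= 1 and b2^2 <= (1 - b1^2) (1 - b3^2).  Taking b = (1, 0, 1) gives w1 + w3;
   saturating the last inequality with b1 = w1 n3 / (w2 n1), b3 = w3 n1 / (w2 n3)
   gives n1 n3 / w2 once w2^2 >= w1 w3.
   Coordinates 1..4 of the paper are the ordinals o0..o3 below. *)

Section RealInequalities.
Variable R : realFieldType.

Lemma le_of_sqr_le (x y : R) : 0 <= y -> x ^+ 2 <= y ^+ 2 -> x <= y.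
Proof.
move=> y_ge0 le_sqr; apply: le_trans (ler_norm x) _.
by rewrite -ler_sqr ?nnegrE // real_normK ?num_real.
Qed.

Lemma ellipse_addr_sqr_le (c d X Y : R) : 0 < c -> 0 < d ->
  (c^-1 * X) ^+ 2 + (d^-1 * Y) ^+ 2 <= 1 -> (X + Y) ^+ 2 <= c ^+ 2 + d ^+ 2.
Proof.
move=> c_gt0 d_gt0; set u := c^-1 * X; set v := d^-1 * Y => uv_le1.
have -> : X + Y = c * u + d * v by rewrite /u /v !mulVKf ?gt_eqF.
have lagrange : (c * u + d * v) ^+ 2 + (c * v - d * u) ^+ 2 =
  (c ^+ 2 + d ^+ 2) * (u ^+ 2 + v ^+ 2) by ring.
apply: (@le_trans _ _ ((c ^+ 2 + d ^+ 2) * (u ^+ 2 + v ^+ 2))).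
  by rewrite -lagrange lerDl sqr_ge0.
by rewrite -[leRHS]mulr1 ler_wpM2l // addr_ge0 ?sqr_ge0.
Qed.

Lemma addr_le_of_sqr_le (w1 w2 w3 U V : R) : 0 < w1 -> 0 < w3 ->
  w2 ^+ 2 <= w1 * w3 -> 0 <= V <= w3 ->
  U ^+ 2 + (w2 * V / w3) ^+ 2 <= w1 ^+ 2 + w2 ^+ 2 -> U + V <= w1 + w3.
Proof.
move=> w1_gt0 w3_gt0 w2_le /andP[V_ge0 V_le] UV_le.
set t := V / w3.
have -> : V = w3 * t by rewrite /t mulrC divfK ?gt_eqF.
have t_ge0 : 0 <= t by rewrite /t divr_ge0 // ltW.
have t_le1 : t <= 1 by rewrite /t ler_pdivrMr // mul1r.
have {}UV_le : U ^+ 2 <= w1 ^+ 2 + w2 ^+ 2 * (1 + t) * (1 - t).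
  have -> : w2 ^+ 2 * (1 + t) * (1 - t) = w2 ^+ 2 - (w2 * V / w3) ^+ 2.
    by rewrite /t; field; rewrite gt_eqF.
  lra.
(* For t = V / w3 in [0, 1], the excess w2^2 (1 - t^2) in the bound on U^2 is absorbed by
   the cross term of (w1 + w3 (1 - t))^2. *)
have w2_le' : w2 ^+ 2 * (1 + t) * (1 - t) <= w1 * w3 * 2 * (1 - t).
  by rewrite ler_wpM2r ?subr_ge0 // ler_pM ?sqr_ge0 //; lra.
have -> : w1 + w3 = w1 + w3 * (1 - t) + w3 * t by ring.
rewrite lerD2r le_of_sqr_le //; first by rewrite addr_ge0 ?mulr_ge0 ?subr_ge0 // ltW.
have -> : (w1 + w3 * (1 - t)) ^+ 2 = w1 ^+ 2 + w1 * w3 * 2 * (1 - t) + (w3 * (1 - t)) ^+ 2.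
  by ring.
have := sqr_ge0 (w3 * (1 - t)); lra.
Qed.

Lemma triangular_sqr_le (p q r u v : R) : p ^+ 2 <= 1 -> r ^+ 2 <= 1 ->
  q ^+ 2 <= (1 - p ^+ 2) * (1 - r ^+ 2) ->
  (p * u + q * v) ^+ 2 + (r * v) ^+ 2 <= u ^+ 2 + v ^+ 2.
Proof.
move=> p_le1 r_le1 q_le; rewrite -subr_ge0.
set a := 1 - p ^+ 2; set c := 1 - q ^+ 2 - r ^+ 2.
have -> : u ^+ 2 + v ^+ 2 - ((p * u + q * v) ^+ 2 + (r * v) ^+ 2) =
  a * u ^+ 2 - 2 * (p * q) * u * v + c * v ^+ 2 by rewrite /a /c; ring.
have [a0|a_gt0] := eqVneq a 0.
  have q0 : q = 0.
    by move: q_le; rewrite -/a a0 mul0r => q_le; apply/eqP; rewrite -sqrf_eq0 eq_le q_le sqr_ge0.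
  by rewrite a0 q0 /c; nra.
have {}a_gt0 : 0 < a by rewrite lt_def a_gt0 /a subr_ge0.
rewrite -(pmulr_rge0 _ a_gt0).
have -> : a * (a * u ^+ 2 - 2 * (p * q) * u * v + c * v ^+ 2) =
  (a * u - p * q * v) ^+ 2 + ((1 - p ^+ 2) * (1 - r ^+ 2) - q ^+ 2) * v ^+ 2
  by rewrite /a /c; ring.
by rewrite addr_ge0 ?sqr_ge0 // mulr_ge0 ?subr_ge0 ?sqr_ge0.
Qed.

End RealInequalities.

Section ComplexModulus.
Variable R : realType.
Local Notation C := R[i].

Lemma cabs2 (z : C) : cabs z ^+ 2 = complex.Re z ^+ 2 + complex.Im z ^+ 2.
Proof. by case: z => x y; rewrite sqr_sqrtr // addr_ge0 ?sqr_ge0. Qed.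

Lemma cabsE (z : C) : (cabs z)%:C%C = `|z|.
Proof. by case: z. Qed.

Lemma cabs_ge0 (z : C) : 0 <= cabs z.
Proof. by case: z => x y; rewrite sqrtr_ge0. Qed.

Lemma cabs0 : cabs (0 : C) = 0.
Proof. by apply: complexI; rewrite cabsE normr0. Qed.

Lemma sqr_cabs0 : cabs (0 : C) ^+ 2 = 0.
Proof. by rewrite cabs0 expr0n. Qed.

Lemma cabs1 : cabs (1 : C) = 1.
Proof. exact: Normc.normc1. Qed.

Lemma cabsN (z : C) : cabs (- z) = cabs z.
Proof. by apply: complexI; rewrite !cabsE normrN. Qed.

Lemma cabsR (r : R) : cabs r%:C%C = `|r|.
Proof. by apply: complexI; rewrite cabsE normc_def /= expr0n addr0 sqrtr_sqr. Qed.

Lemma sqr_cabsR (r : R) : cabs r%:C%C ^+ 2 = r ^+ 2.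
Proof. by rewrite cabsR real_normK ?num_real. Qed.

Lemma cabsM (z u : C) : cabs (z * u) = cabs z * cabs u.
Proof. exact: Normc.normcM. Qed.

Lemma sqr_cabs_scale (r : R) (z : C) : cabs (r%:C * z)%C ^+ 2 = (r * cabs z) ^+ 2.
Proof. by rewrite cabsM !exprMn sqr_cabsR. Qed.

Lemma cabsD (z u : C) : cabs (z + u) <= cabs z + cabs u.
Proof. by rewrite -lecR rmorphD /= !cabsE ler_normD. Qed.

Lemma cabs_sum n (F : 'I_n -> C) : cabs (\sum_i F i) <= \sum_i cabs (F i).
Proof.
elim/big_ind2: _ => [|z1 r1 z2 r2 le1 le2|//]; first by rewrite cabs0.
exact: le_trans (cabsD _ _) (lerD le1 le2).
Qed.

Lemma cabs_triangular_sqr_le (p q r : R) (u v : C) :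
  p ^+ 2 <= 1 -> r ^+ 2 <= 1 -> q ^+ 2 <= (1 - p ^+ 2) * (1 - r ^+ 2) ->
  cabs (p%:C * u + q%:C * v)%C ^+ 2 + cabs (r%:C * v)%C ^+ 2 <=
  cabs u ^+ 2 + cabs v ^+ 2.
Proof.
move: u v => [u1 u2] [v1 v2] p_le1 r_le1 q_le; rewrite !cabs2 /= !(mul0r, subr0, addr0).
have := triangular_sqr_le u1 v1 p_le1 r_le1 q_le.
have := triangular_sqr_le u2 v2 p_le1 r_le1 q_le.
lra.
Qed.

End ComplexModulus.

Section SpectralDistance.
Variable R : realType.
Local Notation C := R[i].

Lemma vnorm_le1 n (x : 'cV[C]_n) :
  (vnorm x <= 1) = (\sum_k cabs (x k 0) ^+ 2 <= 1).
Proof. by rewrite /vnorm -{1}sqrtr1 ler_sqrt. Qed.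

Lemma cabs_le1_of_vnorm n (x : 'cV[C]_n) k : vnorm x <= 1 -> cabs (x k 0) <= 1.
Proof.
rewrite vnorm_le1 (bigD1 k) //= => le1.
rewrite -(ler_sqr (cabs_ge0 _)) ?nnegrE // expr1n; apply: le_trans le1.
by rewrite lerDl sumr_ge0 // => j _; rewrite sqr_ge0.
Qed.

(* [sup] of a set that is not bounded above is a junk value, so [opnorm A <= 1] needs this. *)
Lemma vnorm_mulmx_bounded n (A : 'M[C]_n) :
  exists B, forall x, vnorm x <= 1 -> vnorm (A *m x) <= B.
Proof.
exists (Num.sqrt (\sum_k (\sum_j cabs (A k j)) ^+ 2)) => x x_le1.
rewrite /vnorm ler_sqrt; last by rewrite sumr_ge0 // => k _; rewrite sqr_ge0.
apply: ler_sum => k _.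
have sum_ge0 : 0 <= \sum_j cabs (A k j) by rewrite sumr_ge0 // => j _; exact: cabs_ge0.
rewrite ler_sqr ?nnegrE ?cabs_ge0 // mxE.
apply: le_trans (cabs_sum _) _; apply: ler_sum => j _.
by rewrite cabsM ler_piMr ?cabs_ge0 ?(cabs_le1_of_vnorm _ x_le1).
Qed.

Lemma opnorm_le1P n (A : 'M[C]_n) :
  opnorm A <= 1 <-> forall x, vnorm x <= 1 -> vnorm (A *m x) <= 1.
Proof.
split=> [A_le1 x x_le1|A_le1].
  apply: le_trans A_le1; apply: sup_upper_bound; last by exists x.
  split; first by exists (vnorm (A *m x)), x.
  by have [B leB] := vnorm_mulmx_bounded A; exists B => _ [y y_le1 <-]; apply: leB.
apply: ge_sup; last by move=> _ [y y_le1 <-]; apply: A_le1.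
exists (vnorm (A *m 0)), 0 => //.
by rewrite /= vnorm_le1 big1 // => k _; rewrite mxE cabs0 expr0n.
Qed.

Lemma pimx_diag n (a : 'I_n -> C) : pimx a = diag_mx (\row_i a i).
Proof. by apply/matrixP => i j; rewrite !mxE; case: eqP => [->|]; rewrite ?mulr1n. Qed.

Lemma commx_pimxE n (M : 'M[C]_n) a i j : commx M (pimx a) i j = M i j * (a j - a i).
Proof. by rewrite /commx pimx_diag mul_mx_diag mul_diag_mx !mxE mulrBr [a i * _]mulrC. Qed.

Lemma dM_eq n (M : 'M[C]_n) i j (r : R) :
  (forall a, opnorm (commx M (pimx a)) <= 1 -> cabs (a i - a j) <= r) ->
  (exists2 a, opnorm (commx M (pimx a)) <= 1 & cabs (a i - a j) = r) ->
  dM M i j = r%:E.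
Proof.
move=> ub [a a_adm a_ij]; apply/le_anti/andP; split.
  by apply: ge_ereal_sup => _ [b b_adm <-]; rewrite lee_fin ub.
by rewrite -a_ij; apply: ereal_sup_ubound; exists a.
Qed.

End SpectralDistance.

Definition o0 : 'I_4 := @Ordinal 4 0 isT.
Definition o1 : 'I_4 := @Ordinal 4 1 isT.
Definition o2 : 'I_4 := @Ordinal 4 2 isT.
Definition o3 : 'I_4 := @Ordinal 4 3 isT.

Lemma ord4_cases (i : 'I_4) : [\/ i = o0, i = o1, i = o2 | i = o3].
Proof.
by case: i => [[|[|[|[|//]]]] ?]; [constructor 1|constructor 2|constructor 3|constructor 4];
  apply: val_inj.
Qed.

Lemma sum4 (V : nmodType) (F : 'I_4 -> V) : \sum_j F j = F o0 + F o1 + F o2 + F o3.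
Proof.
rewrite !big_ord_recl big_ord0 addr0 !addrA.
by congr (F _ + F _ + F _ + F _); apply: val_inj.
Qed.

Section PathMatrix.
Variable R : realType.
Local Notation C := R[i].

Definition col4 (c0 c1 c2 c3 : C) : 'cV[C]_4 := \col_(i < 4) [:: c0; c1; c2; c3]`_i.

Lemma col4E c0 c1 c2 c3 :
  (col4 c0 c1 c2 c3 o0 0 = c0) * (col4 c0 c1 c2 c3 o1 0 = c1) *
  (col4 c0 c1 c2 c3 o2 0 = c2) * (col4 c0 c1 c2 c3 o3 0 = c3).
Proof. by rewrite !mxE. Qed.

Lemma vnorm4_le1 (x : 'cV[C]_4) : (vnorm x <= 1) =
  (cabs (x o0 0) ^+ 2 + cabs (x o1 0) ^+ 2 + cabs (x o2 0) ^+ 2 + cabs (x o3 0) ^+ 2 <= 1).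
Proof. by rewrite vnorm_le1 sum4. Qed.

Lemma sqrt_sqr_add_gt0 (x y : R) : 0 < x -> 0 < Num.sqrt (x ^+ 2 + y ^+ 2).
Proof. by move=> x_gt0; rewrite sqrtr_gt0 ltr_wpDr ?sqr_ge0 ?exprn_gt0. Qed.

Lemma sqr_sqrt_sqr_add (x y : R) : Num.sqrt (x ^+ 2 + y ^+ 2) ^+ 2 = x ^+ 2 + y ^+ 2.
Proof. by rewrite sqr_sqrtr // addr_ge0 ?sqr_ge0. Qed.

Variables w1 w2 w3 : R.
Hypotheses (w1_gt0 : 0 < w1) (w2_gt0 : 0 < w2) (w3_gt0 : 0 < w3).
Local Notation d1 := (w1^-1)%:C%C.
Local Notation d2 := (w2^-1)%:C%C.
Local Notation d3 := (w3^-1)%:C%C.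

Lemma pathD_commx_mulmx a x : commx (pathD w1 w2 w3) (pimx a) *m x =
  col4 (d1 * (a o1 - a o0) * x o1 0)
       (d1 * (a o0 - a o1) * x o0 0 + d2 * (a o2 - a o1) * x o2 0)
       (d2 * (a o1 - a o2) * x o1 0 + d3 * (a o3 - a o2) * x o3 0)
       (d3 * (a o2 - a o3) * x o2 0).
Proof.
apply/colP => i; rewrite !mxE sum4 !commx_pimxE !mxE.
by case: (ord4_cases i) => ->; rewrite /= /wpath /=; ring.
Qed.

Lemma path_dist_le_sqrt a : opnorm (commx (pathD w1 w2 w3) (pimx a)) <= 1 ->
  cabs (a o0 - a o3) <= Num.sqrt (w1 ^+ 2 + w2 ^+ 2) * Num.sqrt (w3 ^+ 2 + w2 ^+ 2) / w2.
Proof.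
move=> /opnorm_le1P a_adm.
set n1 := Num.sqrt _; set n3 := Num.sqrt _.
have n3_gt0 : 0 < n3 := sqrt_sqr_add_gt0 _ w3_gt0.
have n1E : n1 ^+ 2 = w1 ^+ 2 + w2 ^+ 2 := sqr_sqrt_sqr_add _ _.
have n3E : n3 ^+ 2 = w3 ^+ 2 + w2 ^+ 2 := sqr_sqrt_sqr_add _ _.
set X := cabs (a o1 - a o0); set Y := cabs (a o1 - a o3).
have XY_le : ((w1 * n3 / w2)^-1 * X) ^+ 2 + (n3^-1 * Y) ^+ 2 <= 1.
  have := a_adm (col4 0 (w2 / n3)%:C%C 0 (- (w3 / n3))%:C%C).
  rewrite !vnorm4_le1 pathD_commx_mulmx !col4E.
  have -> : d1 * (a o1 - a o0) * (w2 / n3)%:C%C = ((w1 * n3 / w2)^-1)%:C%C * (a o1 - a o0).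
    by field; rewrite !fmorph_eq0 !gt_eqF.
  have -> : d2 * (a o1 - a o2) * (w2 / n3)%:C%C + d3 * (a o3 - a o2) * (- (w3 / n3))%:C%C =
      (n3^-1)%:C%C * (a o1 - a o3).
    by field; rewrite !fmorph_eq0 !gt_eqF.
  rewrite !mulr0 !addr0 !sqr_cabs0 !add0r !addr0 !sqr_cabsR !sqr_cabs_scale -/X -/Y.
  rewrite sqrrN !expr_div_n -mulrDl addrC -n3E divff ?sqrf_eq0 ?gt_eqF //.
  by move=> /(_ (lexx 1)).
have n1_gt0 : 0 < n1 := sqrt_sqr_add_gt0 _ w1_gt0.
have XY_sqr_le : (X + Y) ^+ 2 <= (n1 * n3 / w2) ^+ 2.
  have -> : (n1 * n3 / w2) ^+ 2 = (w1 * n3 / w2) ^+ 2 + n3 ^+ 2.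
    by rewrite !expr_div_n !exprMn n1E; field; rewrite gt_eqF.
  by apply: ellipse_addr_sqr_le XY_le; rewrite ?divr_gt0 ?mulr_gt0.
have a03_le : cabs (a o0 - a o3) <= X + Y.
  have -> : a o0 - a o3 = - (a o1 - a o0) + (a o1 - a o3) by ring.
  by apply: le_trans (cabsD _ _) _; rewrite cabsN.
by apply: le_trans a03_le (le_of_sqr_le _ XY_sqr_le); rewrite ltW ?divr_gt0 ?mulr_gt0.
Qed.

Lemma path_dist_le_add a : w2 ^+ 2 <= w1 * w3 ->
  opnorm (commx (pathD w1 w2 w3) (pimx a)) <= 1 -> cabs (a o0 - a o3) <= w1 + w3.
Proof.
move=> w2_le /opnorm_le1P a_adm.
pose n1 := Num.sqrt (w1 ^+ 2 + w2 ^+ 2).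
have n1_gt0 : 0 < n1 := sqrt_sqr_add_gt0 _ w1_gt0.
have n1E : n1 ^+ 2 = w1 ^+ 2 + w2 ^+ 2 := sqr_sqrt_sqr_add _ _.
set U := cabs (a o0 - a o2); set V := cabs (a o2 - a o3).
have V_le : V <= w3.
  have := a_adm (col4 0 0 1 0).
  rewrite !vnorm4_le1 pathD_commx_mulmx !col4E !mulr0 !mulr1 !addr0 !add0r !sqr_cabs0.
  rewrite cabs1 expr1n !add0r !addr0 !sqr_cabs_scale -/V => /(_ (lexx 1)) le1.
  have : (w3^-1 * V) ^+ 2 <= 1 ^+ 2 by rewrite expr1n (le_trans _ le1) // ler_wpDl ?sqr_ge0.
  by move=> /(le_of_sqr_le ler01); rewrite mulrC ler_pdivrMr // mul1r.
have UV_le : U ^+ 2 + (w2 * V / w3) ^+ 2 <= n1 ^+ 2.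
  have := a_adm (col4 (w1 / n1)%:C%C 0 (- (w2 / n1))%:C%C 0).
  rewrite !vnorm4_le1 pathD_commx_mulmx !col4E.
  have -> : d1 * (a o0 - a o1) * (w1 / n1)%:C%C + d2 * (a o2 - a o1) * (- (w2 / n1))%:C%C =
      (n1^-1)%:C%C * (a o0 - a o2).
    by field; rewrite !fmorph_eq0 !gt_eqF.
  have -> : d3 * (a o2 - a o3) * (- (w2 / n1))%:C%C = (w2 / (w3 * n1))%:C%C * - (a o2 - a o3).
    by field; rewrite !fmorph_eq0 !gt_eqF.
  rewrite !mulr0 !addr0 !sqr_cabs0 !add0r !addr0 !sqr_cabsR !sqr_cabs_scale cabsN -/U -/V.
  have x_le1 : (w1 / n1) ^+ 2 + (- (w2 / n1)) ^+ 2 <= 1.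
    by rewrite sqrrN !expr_div_n -mulrDl -n1E divff ?sqrf_eq0 ?gt_eqF.
  move=> /(_ x_le1).
  have -> : (n1^-1 * U) ^+ 2 + (w2 / (w3 * n1) * V) ^+ 2 = (U ^+ 2 + (w2 * V / w3) ^+ 2) / n1 ^+ 2.
    by field; rewrite !gt_eqF.
  by rewrite ler_pdivrMr ?exprn_gt0 // mul1r.
have a03_le : cabs (a o0 - a o3) <= U + V.
  have -> : a o0 - a o3 = (a o0 - a o2) + (a o2 - a o3) by ring.
  exact: cabsD.
have V_bounds : 0 <= V <= w3 by rewrite cabs_ge0 V_le.
apply: le_trans a03_le (addr_le_of_sqr_le w1_gt0 w3_gt0 w2_le V_bounds _).
by rewrite -n1E.
Qed.

Lemma path_real_potential_admissible (s : 'I_4 -> R) (b1 b2 b3 : R) :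
  s o1 - s o0 = w1 * b1 -> s o2 - s o1 = w2 * b2 -> s o3 - s o2 = w3 * b3 ->
  b1 ^+ 2 <= 1 -> b3 ^+ 2 <= 1 -> b2 ^+ 2 <= (1 - b1 ^+ 2) * (1 - b3 ^+ 2) ->
  opnorm (commx (pathD w1 w2 w3) (pimx (fun i => (s i)%:C%C))) <= 1.
Proof.
move=> e1 e2 e3 b1_le b3_le b2_le.
have incr (w b x y : R) : w != 0 -> y - x = w * b ->
    (w^-1)%:C%C * (y%:C - x%:C)%C = b%:C%C /\ (w^-1)%:C%C * (x%:C - y%:C)%C = (- b)%:C%C.
  by move=> w_neq0 e; rewrite -!rmorphB -!rmorphM -(opprB y x) e mulrN mulKf.
have [E1 E1'] := incr _ _ _ _ (lt0r_neq0 w1_gt0) e1.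
have [E2 E2'] := incr _ _ _ _ (lt0r_neq0 w2_gt0) e2.
have [E3 E3'] := incr _ _ _ _ (lt0r_neq0 w3_gt0) e3.
apply/opnorm_le1P => x; rewrite !vnorm4_le1 pathD_commx_mulmx !col4E.
rewrite E1 E1' E2 E2' E3 E3'.
set x0 := x o0 0; set x1 := x o1 0; set x2 := x o2 0; set x3 := x o3 0.
have even : cabs ((- b1)%:C * x0 + b2%:C * x2)%C ^+ 2 + cabs ((- b3)%:C * x2)%C ^+ 2 <=
    cabs x0 ^+ 2 + cabs x2 ^+ 2.
  by apply: cabs_triangular_sqr_le; rewrite !sqrrN.
have odd : cabs (b3%:C * x3 + (- b2)%:C * x1)%C ^+ 2 + cabs (b1%:C * x1)%C ^+ 2 <=
    cabs x3 ^+ 2 + cabs x1 ^+ 2.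
  by apply: cabs_triangular_sqr_le; rewrite // sqrrN mulrC.
rewrite [(- b2)%:C%C * _ + _]addrC.
lra.
Qed.

Lemma path_admissible_witness (b1 b2 b3 : R) :
  b1 ^+ 2 <= 1 -> b3 ^+ 2 <= 1 -> b2 ^+ 2 <= (1 - b1 ^+ 2) * (1 - b3 ^+ 2) ->
  exists2 a, opnorm (commx (pathD w1 w2 w3) (pimx a)) <= 1 &
             cabs (a o0 - a o3) = `|w1 * b1 + w2 * b2 + w3 * b3|.
Proof.
move=> b1_le b3_le b2_le.
pose s (i : 'I_4) := [:: 0; w1 * b1; w1 * b1 + w2 * b2; w1 * b1 + w2 * b2 + w3 * b3]`_i.
exists (fun i => (s i)%:C%C); last by rewrite -rmorphB cabsR /s /= sub0r normrN.
by apply: (path_real_potential_admissible (b1 := b1) (b2 := b2) (b3 := b3)) => //;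
  rewrite /s /=; ring.
Qed.

Lemma path_slopes_sqrt : w1 * w3 <= w2 ^+ 2 -> exists b1 b2 b3 : R,
  [/\ b1 ^+ 2 <= 1, b3 ^+ 2 <= 1, b2 ^+ 2 <= (1 - b1 ^+ 2) * (1 - b3 ^+ 2) &
      w1 * b1 + w2 * b2 + w3 * b3 =
      Num.sqrt (w1 ^+ 2 + w2 ^+ 2) * Num.sqrt (w3 ^+ 2 + w2 ^+ 2) / w2].
Proof.
move=> w13_le.
set n1 := Num.sqrt _; set n3 := Num.sqrt _.
have n1_neq0 : n1 != 0 by rewrite gt_eqF // sqrt_sqr_add_gt0.
have n3_neq0 : n3 != 0 by rewrite gt_eqF // sqrt_sqr_add_gt0.
have n1E : n1 ^+ 2 = w1 ^+ 2 + w2 ^+ 2 := sqr_sqrt_sqr_add _ _.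
have n3E : n3 ^+ 2 = w3 ^+ 2 + w2 ^+ 2 := sqr_sqrt_sqr_add _ _.
have w2_neq0 : w2 != 0 by rewrite gt_eqF.
set K := w2 ^+ 4 - w1 ^+ 2 * w3 ^+ 2.
have K_ge0 : 0 <= K.
  have -> : K = (w2 ^+ 2 - w1 * w3) * (w2 ^+ 2 + w1 * w3) by rewrite /K; ring.
  by rewrite mulr_ge0 ?subr_ge0 // addr_ge0 ?sqr_ge0 // mulr_ge0 ?ltW.
set b1 := w1 * n3 / (w2 * n1); set b3 := w3 * n1 / (w2 * n3).
set b2 := K / (w2 ^+ 2 * n1 * n3).
have b1E : 1 - b1 ^+ 2 = K / (w2 ^+ 2 * n1 ^+ 2).
  rewrite /b1 /K expr_div_n !exprMn n1E n3E; field.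
  by rewrite -n1E sqrf_eq0 n1_neq0 w2_neq0.
have b3E : 1 - b3 ^+ 2 = K / (w2 ^+ 2 * n3 ^+ 2).
  rewrite /b3 /K expr_div_n !exprMn n1E n3E; field.
  by rewrite -n3E sqrf_eq0 n3_neq0 w2_neq0.
exists b1, b2, b3; split.
- by rewrite -subr_ge0 b1E divr_ge0 // mulr_ge0 ?sqr_ge0.
- by rewrite -subr_ge0 b3E divr_ge0 // mulr_ge0 ?sqr_ge0.
- have -> : (1 - b1 ^+ 2) * (1 - b3 ^+ 2) = b2 ^+ 2.
    by rewrite b1E b3E /b2; field; rewrite n1_neq0 n3_neq0 w2_neq0.
  exact: lexx.
- have -> : w1 * b1 + w2 * b2 + w3 * b3 =
      (w1 ^+ 2 * n3 ^+ 2 + w3 ^+ 2 * n1 ^+ 2 + K) / (w2 * n1 * n3).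
    by rewrite /b1 /b2 /b3; field; rewrite n1_neq0 n3_neq0 w2_neq0.
  have -> : n1 * n3 / w2 = n1 ^+ 2 * n3 ^+ 2 / (w2 * n1 * n3).
    by field; rewrite n1_neq0 n3_neq0 w2_neq0.
  by rewrite n1E n3E /K; congr (_ / _); ring.
Qed.

End PathMatrix.

Unset Implicit Arguments.
Local Close Scope classical_set_scope.

Theorem mainTheorem5 (R : realType) (w1 w2 w3 : R)
  (hw1 : 0 < w1) (hw2 : 0 < w2) (hw3 : 0 < w3) :
  (Num.sqrt (w1 * w3) < w2 ->
     dM (pathD w1 w2 w3) (inord 0) (inord 3) =
     (Num.sqrt (w1 ^+ 2 + w2 ^+ 2) * Num.sqrt (w3 ^+ 2 + w2 ^+ 2) / w2)%:E) /\
  (w2 <= Num.sqrt (w1 * w3) ->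
     dM (pathD w1 w2 w3) (inord 0) (inord 3) = (w1 + w3)%:E).
Proof.
have -> : inord 0 = o0 by apply: val_inj; rewrite /= inordK.
have -> : inord 3 = o3 by apply: val_inj; rewrite /= inordK.
have sqrtE : Num.sqrt (w1 * w3) ^+ 2 = w1 * w3 by rewrite sqr_sqrtr // mulr_ge0 ?ltW.
split=> [sqrt_lt|le_sqrt]; apply: dM_eq.
- exact: path_dist_le_sqrt.
- have w13_le : w1 * w3 <= w2 ^+ 2.
    by rewrite -sqrtE ler_sqr ?nnegrE ?sqrtr_ge0 ?(ltW hw2) ?(ltW sqrt_lt).
  have [b1 [b2 [b3 [b1_le b3_le b2_le bE]]]] := path_slopes_sqrt hw1 hw2 hw3 w13_le.
  have [a a_adm a_dist] := path_admissible_witness hw1 hw2 hw3 b1_le b3_le b2_le.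
  by exists a; rewrite // a_dist bE ger0_norm // divr_ge0 ?mulr_ge0 ?sqrtr_ge0 ?ltW.
- have w2_le : w2 ^+ 2 <= w1 * w3.
    by rewrite -sqrtE ler_sqr ?nnegrE ?sqrtr_ge0 ?(ltW hw2).
  by move=> a; apply: path_dist_le_add.
- have b_le : (1 : R) ^+ 2 <= 1 by rewrite expr1n.
  have b2_le : (0 : R) ^+ 2 <= (1 - 1 ^+ 2) * (1 - 1 ^+ 2) by rewrite expr1n subrr mul0r expr0n.
  have [a a_adm a_dist] := path_admissible_witness hw1 hw2 hw3 b_le b_le b2_le.
  by exists a; rewrite // a_dist !mulr1 mulr0 addr0 ger0_norm // addr_ge0 ?ltW.
Qed.
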